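(* Let $G$ be a twin-free graph and let $t\ge 1$. (i) If $G=K_1$, then $\det(G)=0$ and $\det(\mu_t(G))=t$. (ii) If $G=H+K_1$ (disjoint union with one isolated vertex) for some graph $H$ with at least one edge, then $\det(\mu_t(G))=\det(G)+t-1$.
   Context: All graphs are finite and simple. For a graph $G$ with $V(G)=\{v_1,\dots,v_n\}$ and an integer $t\ge1$, the generalized Mycielskian $\mu_t(G)$ has vertex set $\{u_i^s: 1\le i\le n,\ 0\le s\le t\}\cup\{w\}$, where $u_i^0$ is identified with $v_i$. Its edges are: $u_i^0u_j^0$ for each edge $v_iv_j$ of $G$; $u_i^su_j^{s+1}$ and $u_j^su_i^{s+1}$ for each edge $v_iv_j$ of $G$ and each $0\le s<t$; and $u_i^tw$ for all $1\le i\le n$. A set $S\subseteq V(G)$ is a determining set for $G$ if the only automorphism of $G$ fixing every vertex of $S$ is the identity; $\det(G)$ is the minimum size of a determining set. Two vertices are twins if they have the same open neighborhood; $G$ is twin-free if it has no pair of distinct twin vertices. *)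

From mathcomp Require Import all_boot all_fingroup.
Set Implicit Arguments. Unset Strict Implicit. Unset Printing Implicit Defensive.

Definition simple_graph (T : finType) (e : rel T) : Prop :=
  symmetric e /\ irreflexive e.

Definition nbhd (T : finType) (e : rel T) (x : T) : {set T} := [set z | e x z].

Definition twin_free (T : finType) (e : rel T) : Prop :=
  forall x y : T, nbhd e x = nbhd e y -> x = y.

Definition is_aut (T : finType) (e : rel T) (s : {perm T}) : bool :=
  [forall x, [forall y, e (s x) (s y) == e x y]].

Definition determining (T : finType) (e : rel T) (S : {set T}) : bool :=
  [forall s : {perm T}, (is_aut e s && [forall x in S, s x == x]) ==> (s == 1%g)].

(* determining number: the minimum size of a determining set
   (setT is always determining, so the arg min is well defined) *)
Definition det_num (T : finType) (e : rel T) : nat :=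
  #| [arg min_(S < [set: T] | determining e S) #|S| ] |.

(* Generalized Mycielskian mu_t(G): vertex Some (v_i, s) is u_i^s (0 <= s <= t),
   vertex None is w. *)
Definition myc_vertex (T : finType) (t : nat) := option (T * 'I_t.+1)%type.

Definition myc_rel (T : finType) (e : rel T) (t : nat) : rel (myc_vertex T t) :=
  fun a b =>
    match a, b with
    | Some (x, i), Some (y, j) =>
        e x y && [|| (nat_of_ord i == 0) && (nat_of_ord j == 0),
                     (nat_of_ord i).+1 == j | (nat_of_ord j).+1 == i]
    | Some (_, i), None => nat_of_ord i == t
    | None, Some (_, j) => nat_of_ord j == t
    | None, None => false
    end.

Definition addK1 (T : finType) (h : rel T) : rel (option T) :=
  fun a b =>
    match a, b with
    | Some x, Some y => h x y
    | _, _ => false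
    end.

Arguments myc_rel {T} e t.

From mathcomp Require Import all_boot all_fingroup zify.
Set Implicit Arguments. Unset Strict Implicit. Unset Printing Implicit Defensive.

(* Write u_a^i (a a vertex of G, 0 <= i <= t) and w for the vertices of
   mu_t(G).  If a is isolated in G, its copies u_a^0, ..., u_a^(t-1) are
   isolated in mu_t(G), hence pairwise swappable, so a determining set
   contains all but at most one of them.  This gives both lower bounds:
   in (i) a determining set must also meet the swappable pair {u^t, w}; in
   (ii) the remaining elements project onto a determining set of G.
   For the upper bound in (ii), an automorphism of mu_t(H + K_1) fixes the
   unique degree-one vertex u_0^t and its neighbour w, hence every copy of
   the isolated vertex once t-1 of them are fixed; it then preserves levels,
   and if it also fixes a determining set of G on level 0, twin-freeness
   forces it to fix every level in turn. *)

Section GraphAutomorphisms.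

Variables (T : finType) (e : rel T).

Lemma isautP (s : {perm T}) :
  reflect (forall x y, e (s x) (s y) = e x y) (is_aut e s).
Proof.
apply: (iffP forallP) => [As x y | As x]; last by apply/forallP => y; rewrite As.
by move/forallP: (As x) => /(_ y)/eqP.
Qed.

Lemma isautV (s : {perm T}) : is_aut e s -> is_aut e s^-1.
Proof. by move=> /isautP As; apply/isautP => x y; rewrite -As !permKV. Qed.

Lemma aut_nbhd (s : {perm T}) x : is_aut e s -> nbhd e (s x) = s @: nbhd e x.
Proof.
move=> /isautP As; apply/setP => y.
by rewrite -[y](permKV s) mem_imset ?inE ?As //; apply: perm_inj.
Qed.

Lemma aut_deg (s : {perm T}) x : is_aut e s -> #|nbhd e (s x)| = #|nbhd e x|.
Proof. by move=> As; rewrite aut_nbhd // card_imset //; apply: perm_inj. Qed.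

Definition isolated (a : T) : bool := nbhd e a == set0.

Lemma isolatedP a : isolated a -> forall v, e a v = false.
Proof. by move=> /eqP iso v; have := in_set0 v; rewrite -iso inE. Qed.

Lemma aut_isolated (s : {perm T}) x : is_aut e s -> isolated (s x) = isolated x.
Proof. by move=> As; rewrite /isolated -!cards_eq0 aut_deg. Qed.

Lemma detP (S : {set T}) :
  reflect (forall s : {perm T}, is_aut e s -> {in S, forall x, s x = x} -> s = 1%g)
          (determining e S).
Proof.
apply: (iffP forallP) => [dS s As Fs | dS s].
  apply/eqP; apply: (implyP (dS s)); rewrite As /=.
  by apply/forall_inP => x xS; rewrite Fs.
apply/implyP => /andP [As /forall_inP Fs]; apply/eqP; apply: dS => // x xS.
exact/eqP/Fs.
Qed.

Lemma determiningT : determining e [set: T].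
Proof. by apply/detP => s _ Fs; apply/permP => x; rewrite perm1 Fs ?inE. Qed.

Lemma det_num_le (S : {set T}) : determining e S -> det_num e <= #|S|.
Proof.
rewrite /det_num; case: arg_minnP => [|A _ minA dS]; first exact: determiningT.
exact: minA.
Qed.

Lemma det_num_attained : exists2 S, determining e S & #|S| = det_num e.
Proof.
rewrite /det_num; case: arg_minnP => [|A dA _]; first exact: determiningT.
by exists A.
Qed.

Lemma perm_fixed_last (s : {perm T}) (P : pred T) a :
  P (s a) -> (forall b, P b -> b != a -> s b = b) -> s a = a.
Proof.
move=> Psa Fs; apply/eqP; apply: contraT => sa_a.
by have /perm_inj := Fs _ Psa sa_a; move/eqP: sa_a.
Qed.

Lemma determining_drop_fixed (S : {set T}) x :
  (forall s, is_aut e s -> s x = x) -> determining e S -> determining e (S :\ x).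
Proof.
move=> Fx /detP dS; apply/detP => s As Fs; apply: dS => // y yS.
by have [->|yx] := eqVneq y x; [apply: Fx | apply: Fs; rewrite !inE yx].
Qed.

Definition swappable (a b : T) : Prop :=
  forall v, v != a -> v != b -> e a v = e b v.

Lemma isolated_swappable a b : isolated a -> isolated b -> swappable a b.
Proof. by move=> ia ib v _ _; rewrite !isolatedP. Qed.

Hypotheses (e_sym : symmetric e) (e_irr : irreflexive e).

Lemma tperm_aut a b : swappable a b -> is_aut e (tperm a b).
Proof.
move=> sw; apply/isautP => x y.
have sw' v : v <> a -> v <> b -> e a v = e b v by move=> /eqP va /eqP vb; apply: sw.
case: tpermP => [->|->|xa xb]; case: tpermP => [->|->|ya yb];
  rewrite ?e_irr //; try by rewrite e_sym.
- by rewrite sw'.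
- by rewrite sw'.
- by rewrite e_sym -sw' // e_sym.
- by rewrite e_sym sw' // e_sym.
Qed.

Lemma determining_swap (S : {set T}) a b :
  determining e S -> a != b -> swappable a b -> (a \in S) || (b \in S).
Proof.
move=> /detP dS ab sw; apply: contraT => /norP [aS bS].
have fixS : {in S, forall x, tperm a b x = x}.
  by move=> x xS; apply: tpermD; [apply: contraNneq aS | apply: contraNneq bS] => ->.
have := congr1 (fun p : {perm T} => p a) (dS _ (tperm_aut sw) fixS).
by rewrite tpermL perm1 => ba; rewrite ba eqxx in ab.
Qed.

Lemma swap_class_bound (S A : {set T}) :
  determining e S -> {in A &, forall a b, swappable a b} -> #|A| <= #|A :&: S| + 1.
Proof.
move=> dS sw; rewrite -(cardsID S A) leq_add2l.
apply/card_le1_eqP => a b /setDP [aA aS] /setDP [bA bS].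
apply/eqP; apply: contraT => ab.
by have := determining_swap dS ab (sw b a bA aA); rewrite (negbTE aS) (negbTE bS).
Qed.

End GraphAutomorphisms.

Section Mycielskian.

Variables (T : finType) (e : rel T) (t : nat).
Local Notation vertex := (myc_vertex T t).
Local Notation mu := (myc_rel e t).

Lemma myc_sym : symmetric e -> symmetric mu.
Proof.
move=> e_sym [[x i]|] [[y j]|] //=; rewrite e_sym; congr (_ && _).
by rewrite andbC; case: (_ && _) => //=; rewrite orbC.
Qed.

Lemma myc_irr : irreflexive e -> irreflexive mu.
Proof. by move=> e_irr [[x i]|] //=; rewrite e_irr. Qed.

Lemma myc_copy_nbhd a (i : 'I_t.+1) :
  isolated e a -> nbhd mu (Some (a, i)) = if i == t :> nat then [set None] else set0.
Proof.
move=> ia; apply/setP => -[[b j]|]; rewrite !inE /=.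
  by rewrite (isolatedP ia); case: ifP; rewrite ?inE.
by case: ifP => _; rewrite ?inE.
Qed.

Lemma myc_edge_down x y (i : 'I_t.+1) :
  e x y -> mu (Some (x, i)) (Some (y, inord i.-1)).
Proof.
move=> exy /=; rewrite exy /= inordK; last by have := ltn_ord i; lia.
by case: (nat_of_ord i) => [|n] //=; rewrite eqxx !orbT.
Qed.

Lemma myc_edge_up x y (i : 'I_t.+1) :
  e x y -> i < t -> mu (Some (x, i)) (Some (y, inord i.+1)).
Proof. by move=> exy it /=; rewrite exy /= inordK // eqxx /= orbT. Qed.

Lemma myc_deg_cases :
  irreflexive e -> (exists x y, e x y) -> forall v : vertex,
  (exists a i, v = Some (a, i) /\ isolated e a) \/ 1 < #|nbhd mu v|.
Proof.
move=> e_irr [x [y exy]] [[a i]|]; last first.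
  right; apply/card_gt1P; exists (Some (x, ord_max)), (Some (y, ord_max)).
  rewrite !inE /= !eqxx; split=> //.
  by apply: contraTneq exy => -[->]; rewrite e_irr.
have [ia|/set0Pn [b]] := boolP (isolated e a); first by left; exists a, i.
rewrite inE => eab; right; apply/card_gt1P; have iL := ltn_ord i.
exists (Some (b, inord i.-1)), (if i < t then Some (b, inord i.+1) else None).
rewrite !inE myc_edge_down //; case: ltnP => it; split=> //.
- exact: myc_edge_up.
- by apply/eqP => -[] /(congr1 val) /=; rewrite !inordK; lia.
- by rewrite /=; apply/eqP; lia.
Qed.

Definition iso_copies (a : T) : {set vertex} :=
  [set Some (a, widen_ord (leqnSn t) i) | i : 'I_t].

Lemma card_iso_copies a : #|iso_copies a| = t.
Proof. by rewrite card_imset ?card_ord // => i j [] /val_inj. Qed.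

Lemma mem_iso_copies a (v : vertex) :
  (v \in iso_copies a) = if v is Some (b, i) then (b == a) && (i < t) else false.
Proof.
apply/imsetP/idP => [[i _ ->]|]; first by rewrite /= eqxx ltn_ord.
case: v => [[b i]|] // /andP [/eqP -> it]; exists (Ordinal it) => //.
by congr (Some (_, _)); apply: val_inj.
Qed.

Lemma myc_copies_bound (S : {set vertex}) a :
  symmetric e -> irreflexive e -> isolated e a -> determining mu S ->
  t <= #|iso_copies a :&: S| + 1.
Proof.
move=> e_sym e_irr ia dS; rewrite -[X in X <= _](card_iso_copies a).
apply: (swap_class_bound (myc_sym e_sym) (myc_irr e_irr) dS) => u v.
rewrite !mem_iso_copies; case: u => [[b i]|] //; case: v => [[c j]|] //.
move=> /andP [/eqP -> it] /andP [/eqP -> jt].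
by apply: isolated_swappable; rewrite /isolated myc_copy_nbhd // ltn_eqF.
Qed.

Definition low_copies (a : T) : {set vertex} :=
  [set Some (a, inord i) | i : 'I_t.-1].

Lemma card_low_copies a : #|low_copies a| <= t.-1.
Proof. by apply: leq_trans (leq_imset_card _ _) _; rewrite card_ord. Qed.

Lemma mem_low_copies a (i : 'I_t.+1) : i < t.-1 -> Some (a, i) \in low_copies a.
Proof. by move=> it; apply/imsetP; exists (Ordinal it); rewrite //= inord_val. Qed.

Definition myc_lift_fun (s : {perm T}) (v : vertex) : vertex :=
  if v is Some (a, i) then Some (s a, i) else None.

Lemma myc_lift_inj s : injective (myc_lift_fun s).
Proof. by move=> [[a i]|] [[b j]|] //= [/perm_inj -> ->]. Qed.

Definition myc_lift (s : {perm T}) : {perm vertex} := perm (@myc_lift_inj s).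

Lemma myc_lift_aut s : is_aut e s -> is_aut mu (myc_lift s).
Proof.
move=> /isautP As; apply/isautP => -[[a i]|] [[b j]|]; rewrite !permE //=.
by rewrite As.
Qed.

Definition myc_proj (S : {set vertex}) : {set T} :=
  [set a | [exists i, Some (a, i) \in S]].

Lemma myc_proj_determining S : determining mu S -> determining e (myc_proj S).
Proof.
move=> /detP dS; apply/detP => s As Fs; apply/permP => a.
have fixS : {in S, forall v, myc_lift s v = v}.
  move=> [[b i]|] vS; rewrite permE //=; rewrite Fs //.
  by rewrite inE; apply/existsP; exists i.
have /permP /(_ (Some (a, ord0))) := dS _ (myc_lift_aut As) fixS.
by rewrite /myc_lift permE !perm1 => -[].
Qed.

Definition level_preserving (s : {perm vertex}) : Prop :=
  forall a (i : 'I_t.+1), exists b, s (Some (a, i)) = Some (b, i).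

(* Downward induction on the level: a level-i vertex has a
   neighbour at level i+1, so its image lies at level i or i+2, and the
   latter is excluded by applying the induction hypothesis to s^-1. *)
Lemma myc_level_preserving (s : {perm vertex}) :
  is_aut mu s -> s None = None ->
  (forall a i, isolated e a -> s (Some (a, i)) = Some (a, i)) ->
  level_preserving s.
Proof.
suff levels k : forall s : {perm vertex}, is_aut mu s -> s None = None ->
    (forall a i, isolated e a -> s (Some (a, i)) = Some (a, i)) ->
    forall a (i : 'I_t.+1), t <= i + k -> exists b, s (Some (a, i)) = Some (b, i).
  by move=> As sN sI a i; apply: (levels t) => //; rewrite leq_addl.
elim: k => [|k IH] {}s As sN sI a i ik.
  have iE : i = t :> nat by have := ltn_ord i; lia.
  have /isautP /(_ (Some (a, i)) None) := As; rewrite sN /= iE eqxx.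
  case: (s _) => [[b j]|] //= /eqP jt; exists b.
  by congr (Some (_, _)); apply: val_inj => /=; lia.
have [|ik'] := leqP t (i + k); first exact: IH.
have [ia|/set0Pn [c]] := boolP (isolated e a); first by exists a; apply: sI.
rewrite inE => eac; have it : i < t by lia.
have [c' Ec'] : exists c', s (Some (c, inord i.+1)) = Some (c', inord i.+1).
  by apply: IH => //; rewrite inordK; lia.
have := myc_edge_up eac it; rewrite -(isautP _ _ As) Ec'.
case Ev : (s (Some (a, i))) => [[b j]|]; last by move: Ev; rewrite -sN => /perm_inj.
rewrite /= inordK; last by lia.
move=> /andP [_ /or3P [/andP [_ //] | /eqP [ji] | /eqP ij]].
  by exists b; congr (Some (_, _)); apply: val_inj.
have sN' : (s^-1)%g None = None by rewrite -{1}sN permK.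
have sI' a' i' : isolated e a' -> (s^-1)%g (Some (a', i')) = Some (a', i').
  by move=> ia'; rewrite -{1}(sI a' i' ia') permK.
have [b' ] := IH _ (isautV As) sN' sI' b j (ltac:(lia)).
by rewrite -Ev permK => -[_ /(congr1 val) /=]; lia.
Qed.

(* In a twin-free G, a level-preserving automorphism of mu_t(G) fixing the
   level-0 copy of a determining set D of G fixes every u_a^i: on level 0 it
   induces an automorphism of G fixing D, and a vertex whose lower
   neighbourhood is fixed is fixed by twin-freeness. *)
Lemma myc_fix_levels (D : {set T}) (s : {perm vertex}) :
  twin_free e -> determining e D -> is_aut mu s -> level_preserving s ->
  {in D, forall a, s (Some (a, ord0)) = Some (a, ord0)} ->
  forall a i, s (Some (a, i)) = Some (a, i).
Proof.
move=> tw /detP dD /isautP As lev FD.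
pose f a := if s (Some (a, ord0)) is Some (b, _) then b else a.
have fE a : s (Some (a, ord0)) = Some (f a, ord0).
  by have [b Eb] := lev a ord0; rewrite /f Eb.
have f_inj : injective f.
  move=> a b fab.
  by have /perm_inj [] : s (Some (a, ord0)) = s (Some (b, ord0)) by rewrite !fE fab.
have f1 : perm f_inj = 1%g.
  apply: dD => [|a aD]; last by have := FD a aD; rewrite permE fE => -[].
  apply/isautP => a b; rewrite !permE.
  by have := As (Some (a, ord0)) (Some (b, ord0)); rewrite !fE /= !andbT.
suff fix_level n a (i : 'I_t.+1) : i = n :> nat -> s (Some (a, i)) = Some (a, i).
  by move=> a i; apply: fix_level.
elim: n a i => [|n IH] a i iE.
  have -> : i = ord0 by apply: val_inj.
  by rewrite fE; have := congr1 (fun p : {perm T} => p a) f1; rewrite permE perm1 => ->.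
have nt : n < t.+1 by have := ltn_ord i; lia.
have [b Eb] := lev a i; rewrite Eb; congr (Some (_, _)).
apply: tw; apply/setP => c; rewrite !inE.
have := As (Some (a, i)) (Some (c, inord n)).
by rewrite Eb IH ?inordK //= (inordK nt) iE eqxx !orbT !andbT.
Qed.

End Mycielskian.

Section IsolatedVertexAdded.

Variables (T : finType) (h : rel T) (t : nat).
Hypotheses (h_sym : symmetric h) (h_irr : irreflexive h) (h_edge : exists x y, h x y).
Hypotheses (tw : twin_free (addK1 h)) (t_gt0 : 0 < t).
Local Notation G := (addK1 h).
Local Notation mu := (myc_rel G t).
Local Notation z := (Some (None, ord_max) : myc_vertex (option T) t).

Lemma addK1_sym : symmetric G.
Proof. by move=> [x|] [y|] //=; rewrite h_sym. Qed.

Lemma addK1_irr : irreflexive G.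
Proof. by move=> [x|] //=. Qed.

Lemma addK1_edge : exists x y, G x y.
Proof. by have [x [y hxy]] := h_edge; exists (Some x), (Some y). Qed.

Lemma addK1_isolated a : isolated G a = (a == None).
Proof.
have nbhd_None : nbhd G None = set0 by apply/setP => -[v|]; rewrite !inE.
case: a => [x|]; last by rewrite /isolated nbhd_None eqxx.
by apply/negbTE/negP => /eqP ix; have /tw := etrans ix (esym nbhd_None).
Qed.

Lemma nbhd_z : nbhd mu z = [set None].
Proof. by rewrite myc_copy_nbhd ?addK1_isolated //= eqxx. Qed.

(* The vertex u_0^t is the unique vertex of degree one, hence is fixed by
   every automorphism; so is its neighbour w. *)
Lemma aut_fix_z s : is_aut mu s -> s z = z.
Proof.
move=> As; have := aut_deg z As; rewrite nbhd_z cards1.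
case: (myc_deg_cases addK1_irr addK1_edge (s z)) => [[a [i [-> ia]]] | gt1]; last first.
  by move=> deg1; rewrite deg1 in gt1.
rewrite addK1_isolated in ia; rewrite (eqP ia) myc_copy_nbhd ?addK1_isolated //.
case: eqP => [it _ | _]; last by rewrite cards0.
by congr (Some (_, _)); apply: val_inj.
Qed.

Lemma aut_fix_w s : is_aut mu s -> s None = None.
Proof.
move=> As; have : s None \in nbhd mu (s z) by rewrite inE (isautP _ _ As) /= eqxx.
by rewrite aut_fix_z // nbhd_z inE => /eqP.
Qed.

(* An automorphism fixing u_0^0, ..., u_0^(t-2) fixes every copy of the
   isolated vertex: u_0^t is fixed by degree, and u_0^(t-1) is the last
   isolated vertex. *)
Lemma aut_fix_copies s : is_aut mu s -> {in low_copies t None, forall v, s v = v} ->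
  forall i, s (Some (None, i)) = Some (None, i).
Proof.
move=> As Fs i; have iL := ltn_ord i.
have [it|ti] := ltnP i t.-1; first by apply: Fs; apply: mem_low_copies.
have [iT|iT] := eqVneq (i : nat) t.
  by rewrite (_ : i = ord_max) ?aut_fix_z //; apply: val_inj.
apply: (perm_fixed_last (P := isolated mu)).
  by rewrite aut_isolated // /isolated myc_copy_nbhd ?addK1_isolated // (negbTE iT).
move=> v; case: (myc_deg_cases addK1_irr addK1_edge v) => [[a [j [-> ja]]] | gt1]; last first.
  by rewrite /isolated -cards_eq0 => /eqP deg0; rewrite deg0 in gt1.
rewrite addK1_isolated in ja; rewrite (eqP ja) /isolated myc_copy_nbhd ?addK1_isolated //.
case: ifP => [_ /eqP/setP/(_ None) | /negbT jT _ ji]; first by rewrite !inE.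
apply: Fs; apply: mem_low_copies.
have : (j : nat) != i by apply: contraNneq ji => /val_inj ->.
have := ltn_ord j; lia.
Qed.

(* Upper bound: D at level 0 together with u_0^0, ..., u_0^(t-2) determines
   mu_t(G). *)
Lemma myc_det_upper (D : {set option T}) :
  determining G D -> det_num mu <= #|D| + t.-1.
Proof.
move=> dD; set S0 := [set Some (a, ord0) | a in D] : {set myc_vertex (option T) t}.
apply: (@leq_trans #|S0 :|: low_copies t None|); last first.
  rewrite cardsU; apply: leq_trans (leq_subr _ _) _.
  by apply: leq_add; [apply: leq_imset_card | apply: card_low_copies].
apply: det_num_le; apply/detP => s As Fs.
have sw := aut_fix_w As.
have sI : forall i, s (Some (None, i)) = Some (None, i).
  by apply: aut_fix_copies => // v vS; apply: Fs; rewrite inE vS orbT.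
have lev : level_preserving s.
  apply: (myc_level_preserving As sw) => a i; rewrite addK1_isolated => /eqP ->.
  exact: sI.
have fixD : {in D, forall a, s (Some (a, ord0)) = Some (a, ord0)}.
  by move=> a aD; apply: Fs; rewrite inE; apply/orP; left; apply: imset_f.
apply/permP => -[[a i]|]; rewrite perm1 //.
exact: (myc_fix_levels tw dD As lev fixD).
Qed.

(* Lower bound: a determining set S of mu_t(G) contains t-1 copies of the
   isolated vertex, and its other elements project onto a determining set
   of G (the isolated vertex, fixed by every automorphism, being dropped). *)
Lemma myc_det_lower : det_num G + t.-1 <= det_num mu.
Proof.
have [S dS <-] := det_num_attained mu.
set A : {set myc_vertex (option T) t} := iso_copies t None.
have copies : t <= #|A :&: S| + 1.
  by apply: myc_copies_bound addK1_sym addK1_irr _ dS; rewrite addK1_isolated.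
set Q := myc_proj S :\ None.
have dQ : determining G Q.
  apply: determining_drop_fixed (myc_proj_determining dS) => s As.
  by apply/eqP; rewrite -addK1_isolated aut_isolated // addK1_isolated.
have QS : #|Q| <= #|S :\: A|.
  pose proj (v : myc_vertex (option T) t) := if v is Some (a, _) then a else None.
  apply: leq_trans (leq_imset_card proj _); apply: subset_leq_card.
  apply/subsetP => a; rewrite !inE => /andP [aN /existsP [i iS]].
  apply/imsetP; exists (Some (a, i)) => //.
  by rewrite !inE iS mem_iso_copies (negbTE aN) andbT.
rewrite -(cardsID A S) addnC; apply: leq_add; last exact: leq_trans (det_num_le dQ) QS.
by rewrite -subn1 leq_subLR addnC setIC.
Qed.

End IsolatedVertexAdded.

Section SingleVertex.

Variables (T : finType) (e : rel T) (t : nat) (x0 : T).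
Hypotheses (e_sym : symmetric e) (e_irr : irreflexive e).
Hypotheses (all_x0 : forall x, x = x0) (t_gt0 : 0 < t).
Local Notation mu := (myc_rel e t).
Local Notation z := (Some (x0, ord_max) : myc_vertex T t).

(* K_1 has only the trivial automorphism. *)
Lemma K1_det_num : det_num e = 0.
Proof.
apply/eqP; rewrite -leqn0 -(cards0 T); apply: det_num_le; apply/detP => s _ _.
by apply/permP => x; rewrite perm1 (all_x0 (s x)) (all_x0 x).
Qed.

(* Fixing w and u^0, ..., u^(t-2) fixes u^t (the neighbour of w) and hence
   everything. *)
Lemma myc_K1_upper : det_num mu <= t.
Proof.
apply: (@leq_trans #|low_copies t x0 :|: [set None]|).
  apply: det_num_le; apply/detP => s As Fs.
  have sw : s None = None by apply: Fs; rewrite !inE eqxx orbT.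
  have sz : s z = z.
    have /isautP /(_ z None) := As; rewrite sw /= eqxx.
    case: (s _) => [[b j]|] //= /eqP jt; rewrite (all_x0 b).
    by congr (Some (_, _)); apply: val_inj.
  have fix_off_last u : u != Some (x0, inord t.-1) -> s u = u.
    case: u => [[a i]|] //; rewrite (all_x0 a) => ne; have iL := ltn_ord i.
    have [it|ti] := ltnP i t.-1; first by apply: Fs; rewrite inE mem_low_copies.
    rewrite (_ : i = ord_max) //; apply: val_inj => /=.
    have : (i : nat) != t.-1.
      apply: contraNneq ne => it; apply/eqP; congr (Some (_, _)).
      by apply: val_inj; rewrite /= inordK; lia.
    lia.
  apply/permP => v; rewrite perm1.
  have [->|] := eqVneq v (Some (x0, inord t.-1)); last exact: fix_off_last.
  by apply: (perm_fixed_last (P := predT)) => // b _; apply: fix_off_last.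
rewrite cardsU cards1; apply: leq_trans (leq_subr _ _) _.
by have := card_low_copies t x0; lia.
Qed.

(* A determining set contains t-1 isolated copies of x0 and one of the
   swappable pair {u^t, w}. *)
Lemma myc_K1_lower : t <= det_num mu.
Proof.
have [S dS <-] := det_num_attained mu.
have iso0 : isolated e x0 by apply/eqP/setP => v; rewrite !inE (all_x0 v) e_irr.
have copies := myc_copies_bound e_sym e_irr iso0 dS.
have zw : (z \in S) || (None \in S).
  apply: (determining_swap (myc_sym e_sym) (myc_irr e_irr) dS) => // -[[a i]|] // vz _.
  rewrite /= (all_x0 a) e_irr /=; apply/esym/negbTE; apply: contra vz => /eqP it.
  by apply/eqP; rewrite (all_x0 a); congr (Some (_, _)); apply: val_inj.
have outside : 0 < #|S :\: iso_copies t x0|.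
  apply/card_gt0P; case/orP: zw => [zS|wS]; [exists z | exists None];
    by rewrite !inE mem_iso_copies ?ltnn ?andbF ?zS ?wS.
rewrite -(cardsID (iso_copies t x0) S) setIC.
by apply: leq_trans copies _; rewrite leq_add2l.
Qed.

End SingleVertex.

Unset Implicit Arguments.

Theorem mainTheorem2 (t : nat) (ht : 1 <= t) :
  (forall (T : finType) (e : rel T),
      simple_graph e -> twin_free e -> #|T| = 1 ->
      det_num e = 0 /\ det_num (myc_rel e t) = t)
  /\
  (forall (T : finType) (h : rel T),
      simple_graph h -> (exists x y, h x y) -> twin_free (addK1 h) ->
      det_num (myc_rel (addK1 h) t) = det_num (addK1 h) + t - 1).
Proof.
split.
  move=> T e [e_sym e_irr] _ cardT.
  have /card_gt0P [x0 _] : 0 < #|T| by rewrite cardT.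
  have all_x0 x : x = x0.
    have /card_le1_eqP T_le1 : #|T| <= 1 by rewrite cardT.
    exact: T_le1.
  split; first exact: K1_det_num all_x0.
  by apply/eqP; rewrite eqn_leq (myc_K1_upper e all_x0 ht) (myc_K1_lower t e_sym e_irr all_x0).
move=> T h [h_sym h_irr] h_edge tw.
have [D dD cD] := det_num_attained (addK1 h).
have up := myc_det_upper h_irr h_edge tw ht dD.
have lo := myc_det_lower t h_sym h_irr tw.
rewrite cD in up; lia.
Qed.
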